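(* Let $P$ be a flasque pre-meadow with $\mathbf{a}$. For $x\in P$ let $J_x=\{0\cdot z\in 0\cdot P\mid x+0\cdot z\in P_{0\cdot z}^{\times}\}$. Then $J_x$ has a greatest element (with respect to the order on $0\cdot P$) for all $x\in P$ if and only if $J_x$ has a greatest element for all $x\in P_0$.
   Context: A pre-meadow is a structure $(P,+,-,\cdot,0,1)$ satisfying: $(x+y)+z=x+(y+z)$, $x+y=y+x$, $x+0=x$, $x+(-x)=0\cdot x$, $(xy)z=x(yz)$, $xy=yx$, $1\cdot x=x$, $x(y+z)=xy+xz$, $-(-x)=x$, $0\cdot(x+y)=0\cdot x\cdot y$. For $z\in 0\cdot P$ put $P_z:=\{x\in P\mid 0\cdot x=z\}$. $P$ is a pre-meadow with $\mathbf{a}$ if there is a unique $z\in 0\cdot P$ with $|P_z|=1$, denoted $\mathbf{a}$, and $x+\mathbf{a}=\mathbf{a}$ for all $x\in P$. Each $P_{0\cdot z}$ is a commutative ring with the induced operations (zero $0\cdot z$, unit $1+0\cdot z$), and $P_{0\cdot z}^{\times}$ denotes its group of units. The set $0\cdot P$ is ordered by $0\cdot z\le 0\cdot w$ iff $0\cdot z\cdot w=0\cdot z$ (so $0$ is greatest and $\mathbf{a}$ least). For $0\cdot z\le 0\cdot w$ the transition map $f_{0\cdot w,0\cdot z}:P_{0\cdot w}\to P_{0\cdot z}$ is $x\mapsto x+0\cdot z$. $P$ is flasque if all transition maps are surjective. *)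

Record premeadow := PreMeadow {
  pm_car :> Type;
  pm_add : pm_car -> pm_car -> pm_car;
  pm_opp : pm_car -> pm_car;
  pm_mul : pm_car -> pm_car -> pm_car;
  pm_zero : pm_car;
  pm_one : pm_car;
  pm_addA : forall x y z, pm_add (pm_add x y) z = pm_add x (pm_add y z);
  pm_addC : forall x y, pm_add x y = pm_add y x;
  pm_add0 : forall x, pm_add x pm_zero = x;
  pm_addN : forall x, pm_add x (pm_opp x) = pm_mul pm_zero x;
  pm_mulA : forall x y z, pm_mul (pm_mul x y) z = pm_mul x (pm_mul y z);
  pm_mulC : forall x y, pm_mul x y = pm_mul y x;
  pm_mul1 : forall x, pm_mul pm_one x = x;
  pm_mulD : forall x y z, pm_mul x (pm_add y z) = pm_add (pm_mul x y) (pm_mul x z);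
  pm_oppK : forall x, pm_opp (pm_opp x) = x;
  pm_zeroD : forall x y, pm_mul pm_zero (pm_add x y) = pm_mul (pm_mul pm_zero x) y
}.

Section Defs.
Variable P : premeadow.
Local Notation "x + y" := (pm_add P x y).
Local Notation "x * y" := (pm_mul P x y).
Local Notation "0" := (pm_zero P).
Local Notation "1" := (pm_one P).

Definition in_zeroP (a : P) : Prop := exists w : P, a = 0 * w.

Definition in_Pz (a y : P) : Prop := 0 * y = a.

(* y is a unit of the commutative ring P_a (zero a, unit 1 + a) *)
Definition unit_Pz (a y : P) : Prop :=
  in_Pz a y /\ exists u : P, in_Pz a u /\ y * u = 1 + a.

Definition le0 (z w : P) : Prop := 0 * z * w = 0 * z.

Definition has_a : Prop :=
  exists a : P,
    (in_zeroP a /\ exists y : P, forall y', in_Pz a y' <-> y' = y) /\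
    (forall b : P, in_zeroP b -> (exists y : P, forall y', in_Pz b y' <-> y' = y) -> b = a) /\
    (forall x : P, x + a = a).

(* all transition maps f_{0w,0z} : P_{0w} -> P_{0z}, x |-> x + 0z are surjective *)
Definition flasque : Prop :=
  forall z w : P, le0 z w ->
    forall y : P, in_Pz (0 * z) y ->
      exists x : P, in_Pz (0 * w) x /\ x + 0 * z = y.

Definition inJ (x z : P) : Prop := unit_Pz (0 * z) (x + 0 * z).

Definition J_has_greatest (x : P) : Prop :=
  exists z : P, inJ x z /\ forall w : P, inJ x w -> le0 w z.

End Defs.

(* Given x, surjectivity of the transition map P_0 -> P_(0x) yields x' in P_0
   with x' + 0x = x. Transition maps are ring homomorphisms, so every J_y is a
   down-set of 0P; moreover J_x lies below 0x, and below 0x adding 0w to x or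
   to x' gives the same element. Hence J_x is the intersection of J_x' with the
   down-set of 0x, and if 0g is greatest in J_x' then the meet 0gx is greatest
   in J_x. *)


Section PreMeadowTheory.
Variable P : premeadow.
Local Notation "x + y" := (pm_add P x y).
Local Notation "- x" := (pm_opp P x).
Local Notation "x * y" := (pm_mul P x y).
Local Notation "0" := (pm_zero P).
Local Notation "1" := (pm_one P).

Lemma mulCA x y z : x * (y * z) = y * (x * z).
Proof. rewrite <- !pm_mulA, (pm_mulC P x y); reflexivity. Qed.

Lemma mul01 : 0 * 1 = 0.
Proof. rewrite pm_mulC; apply pm_mul1. Qed.

Lemma mul00 : 0 * 0 = 0.
Proof.
  pose proof (pm_zeroD P 1 0) as H.
  rewrite pm_add0, mul01 in H; symmetry; exact H.
Qed.

Lemma mul0_idem x : 0 * (0 * x) = 0 * x.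
Proof. rewrite <- pm_mulA, mul00; reflexivity. Qed.

Lemma mul0N x : 0 * - x = 0 * x.
Proof. rewrite <- (pm_addN P (- x)), pm_oppK, pm_addC, pm_addN; reflexivity. Qed.

Lemma mul0_sqr x : 0 * (x * x) = 0 * x.
Proof.
  pose proof (pm_zeroD P x (- x)) as H.
  rewrite pm_addN, mul0_idem, pm_mulA, (pm_mulC P x (- x)), <- pm_mulA, mul0N,
    pm_mulA in H.
  symmetry; exact H.
Qed.

Lemma mul0_mulK x y : 0 * (x * (x * y)) = 0 * (x * y).
Proof. rewrite <- (pm_mulA P x x y), <- (pm_mulA P 0), mul0_sqr, pm_mulA; reflexivity. Qed.

Lemma add_mul0 x y : 0 * x + 0 * y = 0 * (x * y).
Proof. rewrite <- pm_mulD, pm_zeroD, pm_mulA; reflexivity. Qed.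

Lemma add_mul0_id x : 0 * x + 0 * x = 0 * x.
Proof. rewrite add_mul0; apply mul0_sqr. Qed.

Lemma mul0_mul0 x : 0 * x * (0 * x) = 0 * x.
Proof. rewrite pm_mulA, (mulCA x 0 x), mul0_idem; apply mul0_sqr. Qed.

Lemma le0E w z : le0 P w z <-> 0 * (w * z) = 0 * w.
Proof. unfold le0; rewrite pm_mulA; split; trivial. Qed.

Lemma add_le0 w z : le0 P w z -> 0 * z + 0 * w = 0 * w.
Proof. intros Hwz%le0E; rewrite add_mul0, (pm_mulC P z w); exact Hwz. Qed.

Lemma le0_mull x y : le0 P (x * y) x.
Proof. apply le0E; rewrite (pm_mulC P _ x); apply mul0_mulK. Qed.

Lemma le0_mulr x y : le0 P (x * y) y.
Proof. rewrite pm_mulC; apply le0_mull. Qed.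

Lemma le0_mul w x y : le0 P w x -> le0 P w y -> le0 P w (x * y).
Proof. unfold le0; intros Hx Hy; rewrite <- pm_mulA, Hx; exact Hy. Qed.

Lemma mul_Pz_absorb y z w : in_Pz P (0 * z) y -> le0 P w z -> y * (0 * w) = 0 * w.
Proof.
  unfold in_Pz; intros Hy Hwz%le0E.
  rewrite mulCA, <- pm_mulA, Hy, pm_mulA, (pm_mulC P z w); exact Hwz.
Qed.

Lemma in_Pz_transition y z w :
  in_Pz P (0 * z) y -> le0 P w z -> in_Pz P (0 * w) (y + 0 * w).
Proof.
  intros Hy Hwz; unfold in_Pz.
  rewrite pm_zeroD, pm_mulA, (mul_Pz_absorb y z w Hy Hwz); apply mul0_idem.
Qed.

Lemma unit_Pz_transition y z w :
  unit_Pz P (0 * z) y -> le0 P w z -> unit_Pz P (0 * w) (y + 0 * w).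
Proof.
  intros [Hy [u [Hu Hyu]]] Hwz.
  split; [apply (in_Pz_transition y z); assumption|].
  exists (u + 0 * w); split; [apply (in_Pz_transition u z); assumption|].
  rewrite pm_mulD, (pm_mulC P (y + 0 * w) u), (pm_mulC P (y + 0 * w) (0 * w)), !pm_mulD.
  rewrite (pm_mulC P u y), Hyu, (pm_mulC P (0 * w) y), mul0_mul0.
  rewrite (mul_Pz_absorb u z w Hu Hwz), (mul_Pz_absorb y z w Hy Hwz), add_mul0_id.
  rewrite (pm_addA P (1 + 0 * z)), add_mul0_id, pm_addA, (add_le0 w z Hwz).
  reflexivity.
Qed.

Lemma inJ_le0 x w : inJ P x w -> le0 P w x.
Proof.
  intros [Hw _]; unfold in_Pz in Hw; apply le0E.
  rewrite pm_zeroD, pm_mulA, (mulCA x 0 w), mul0_idem, (pm_mulC P x w) in Hw; exact Hw.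
Qed.

Lemma inJ_downward x z w : inJ P x z -> le0 P w z -> inJ P x w.
Proof.
  intros Hz Hwz; unfold inJ.
  replace (x + 0 * w) with (x + 0 * z + 0 * w)
    by (rewrite pm_addA, (add_le0 w z Hwz); reflexivity).
  apply (unit_Pz_transition _ z); assumption.
Qed.

Lemma inJ_shift x' x w : x' + 0 * x = x -> le0 P w x -> inJ P x w = inJ P x' w.
Proof.
  intros Hx Hwx; unfold inJ.
  rewrite <- Hx, pm_addA, (add_le0 w x Hwx); reflexivity.
Qed.

Lemma J_has_greatest_shift x' x :
  x' + 0 * x = x -> J_has_greatest P x' -> J_has_greatest P x.
Proof.
  intros Hx [g [Hg Hg_max]].
  exists (g * x); split.
  - rewrite (inJ_shift x' x) by (exact Hx || apply le0_mulr).
    apply (inJ_downward _ g); [exact Hg | apply le0_mull].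
  - intros w Hw.
    pose proof (inJ_le0 x w Hw) as Hwx.
    rewrite (inJ_shift x' x w Hx Hwx) in Hw.
    apply le0_mul; [apply Hg_max|]; assumption.
Qed.

Lemma flasque_lift_to_P0 :
  flasque P -> forall x : P, exists x', 0 * x' = 0 /\ x' + 0 * x = x.
Proof.
  intros Hfl x.
  destruct (Hfl x 1) with (y := x) as [x' [Hx'0 Hx']].
  - unfold le0; rewrite pm_mulC, pm_mul1; reflexivity.
  - reflexivity.
  - exists x'; split; [|exact Hx'].
    unfold in_Pz in Hx'0; rewrite mul01 in Hx'0; exact Hx'0.
Qed.

End PreMeadowTheory.

Theorem theorem3p12 (P : premeadow) :
  has_a P -> flasque P ->
  ((forall x : P, J_has_greatest P x) <->
   (forall x : P, pm_mul P (pm_zero P) x = pm_zero P -> J_has_greatest P x)).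
Proof.
  intros _ Hfl; split.
  - intros Hall x _; apply Hall.
  - intros HP0 x.
    destruct (flasque_lift_to_P0 P Hfl x) as [x' [Hx'0 Hx']].
    apply (J_has_greatest_shift P x'); [exact Hx' | exact (HP0 x' Hx'0)].
Qed.
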